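(* Strong coherence does not satisfy directionality. That is, there exist an SBAF $\mathcal{SB}=\langle\mathcal{L},A,\to,\text{supp}\rangle$, a set $U\subseteq A$ and a set $E\subseteq U$ with the following properties: (i) no argument of $A\setminus U$ attacks an argument of $U$, and no argument $b\in U$ is supported by $A\setminus U$ (i.e. $Prem(b)\not\subseteq Sent(A\setminus U)$ for all $b\in U$); (ii) $E$ is strongly coherent in the restricted SBAF $\mathcal{SB}_{|U}$; (iii) there is no strongly coherent extension $E'\subseteq A$ of $\mathcal{SB}$ with $E=E'\cap U$.
   Context: A language is a triple $\mathcal{L}=\langle L,\overline{\cdot},n\rangle$: $L$ is a nonempty set of sentences; $\overline{\cdot}$ assigns to each $s\in L$ a set $\overline{s}\subseteq L$ of sentences incompatible with $s$, and is symmetric ($s\in\overline{t}\iff t\in\overline{s}$); $n$ is a partial naming function assigning to an argument $a$ a sentence $n(a)\in L$ (if $n(a)$ is undefined, put $\overline{n(a)}:=\emptyset$), and $\overline{n(\langle\{t\},t\rangle)}=\emptyset$ for all $t\in L$. An argument is a pair $a=\langle Prem(a),Conc(a)\rangle$ with $Prem(a)$ a nonempty finite subset of $L$ and $Conc(a)\in L$; $Sent(a):=Prem(a)\cup\{Conc(a)\}$ and $Sent(E):=\bigcup_{a\in E}Sent(a)$. The minimal argument for $s$ is $\langle\{s\},s\rangle$. A set $E$ of arguments supports an argument $a$ if $Prem(a)\subseteq Sent(E)$; $E$ contains undercutting information for $a$ if $\overline{n(a)}\cap Sent(E)\neq\emptyset$. Argument $a$ attacks $b$ ($a\to b$) if $Conc(a)\in\overline{s}$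 for some $s\in Sent(b)$ or $Conc(a)\in\overline{n(b)}$. An SBAF is $\mathcal{SB}=\langle\mathcal{L},A,\to,\text{supp}\rangle$ with $A$ a finite set of arguments in $\mathcal L$ and attack and support as just defined. For $E\subseteq A$: $E\to b$ if some $a\in E$ attacks $b$; $E$ defends $a\in A$ if $E\to b$ for every $b\in A$ with $b\to a$; $E$ is conflict-free if there are no $a,b\in E$ with $a\to b$; $E$ is admissible if it is conflict-free and defends each of its elements. $E\subseteq A$ is strongly coherent if it is admissible and for every $a\in A$: if $E$ supports $a$ and $E$ contains no undercutting information for $a$, then $a\in E$. For $U\subseteq A$, $\mathcal{SB}_{|U}=\langle\mathcal{L},U,\to\cap(U\times U),\text{supp restricted to }U\rangle$ is the SBAF with argument set $U$; all notions (defence, admissibility, coherence) in $\mathcal{SB}_{|U}$ are computed with $U$ in place of $A$. *)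

From Stdlib Require Import List.

Set Implicit Arguments.

Record Arg (S : Type) := mkArg { prem : S -> Prop; conc : S }.

(* A language <L, overline, n> over a sentence carrier S.
   [incomp s t] means t \in overline(s); [name a = Some s] means n(a) = s,
   [name a = None] means n(a) is undefined. *)
Record Language (S : Type) := mkLanguage {
  Lset : S -> Prop;
  incomp : S -> S -> Prop;
  name : Arg S -> option S }.

Definition minimal_arg (S : Type) (t : S) : Arg S := mkArg (fun x => x = t) t.

(* overline(n(a)), with overline(n(a)) = empty if n(a) undefined *)
Definition ov_name (S : Type) (Lg : Language S) (a : Arg S) (x : S) : Prop :=
  match name Lg a with Some s => incomp Lg s x | None => False end.

Definition wf_language (S : Type) (Lg : Language S) : Prop :=
  (exists s, Lset Lg s) /\
  (forall s t, incomp Lg s t -> Lset Lg s /\ Lset Lg t) /\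
  (forall s t, incomp Lg s t <-> incomp Lg t s) /\
  (forall a s, name Lg a = Some s -> Lset Lg s) /\
  (forall t x, ~ ov_name Lg (minimal_arg t) x).

Definition finite_set (T : Type) (P : T -> Prop) : Prop :=
  exists l : list T, forall x, P x <-> In x l.

Definition is_argument (S : Type) (Lg : Language S) (a : Arg S) : Prop :=
  (exists x, prem a x) /\ finite_set (prem a) /\
  (forall x, prem a x -> Lset Lg x) /\ Lset Lg (conc a).

Definition Sent (S : Type) (a : Arg S) (x : S) : Prop := prem a x \/ x = conc a.
Definition SentE (S : Type) (E : Arg S -> Prop) (x : S) : Prop :=
  exists a, E a /\ Sent a x.

Definition supports (S : Type) (E : Arg S -> Prop) (a : Arg S) : Prop :=
  forall x, prem a x -> SentE E x.
Definition undercut_info (S : Type) (Lg : Language S) (E : Arg S -> Prop) (a : Arg S) : Prop :=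
  exists x, ov_name Lg a x /\ SentE E x.

Definition attacks (S : Type) (Lg : Language S) (a b : Arg S) : Prop :=
  (exists s, Sent b s /\ incomp Lg s (conc a)) \/ ov_name Lg b (conc a).

Definition is_SBAF (S : Type) (Lg : Language S) (A : Arg S -> Prop) : Prop :=
  wf_language Lg /\ finite_set A /\ (forall a, A a -> is_argument Lg a).

Definition subset (T : Type) (P Q : T -> Prop) : Prop := forall x, P x -> Q x.

(* notions relative to the argument set A (used with A := U for SB_|U) *)
Definition defends (S : Type) (Lg : Language S) (A E : Arg S -> Prop) (a : Arg S) : Prop :=
  forall b, A b -> attacks Lg b a -> exists c, E c /\ attacks Lg c b.
Definition conflict_free (S : Type) (Lg : Language S) (E : Arg S -> Prop) : Prop :=
  forall a b, E a -> E b -> ~ attacks Lg a b.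
Definition admissible (S : Type) (Lg : Language S) (A E : Arg S -> Prop) : Prop :=
  conflict_free Lg E /\ (forall a, E a -> defends Lg A E a).
Definition strongly_coherent (S : Type) (Lg : Language S) (A E : Arg S -> Prop) : Prop :=
  subset E A /\ admissible Lg A E /\
  (forall a, A a -> supports E a -> ~ undercut_info Lg E a -> E a).

From Stdlib Require Import List.

(* Over a language without incompatibilities there are no attacks, so strong
   coherence is just closure under support.  Take the arguments
   <{0},1>, <{1},2>, <{0,2},3> and let U omit <{1},2>.  In U the set
   {<{0},1>} is closed: <{0,2},3> needs the sentence 2, which only the
   argument outside U provides.  In the full framework closure adds <{1},2>
   and then <{0,2},3>, an argument of U outside the given set. *)

Section FreeLanguage.

Context {S : Type}.

Definition free_language : Language S :=
  mkLanguage (fun _ => True) (fun _ _ => False) (fun _ => None).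

Definition arg_of (l : list S) (c : S) : Arg S := mkArg (fun x => In x l) c.

Lemma free_language_wf (s : S) : wf_language free_language.
Proof.
  split; [now exists s|].
  repeat split; cbn; intros; easy.
Qed.

Lemma arg_of_is_argument x l c : is_argument free_language (arg_of (x :: l) c).
Proof. repeat split; [exists x; now left | now exists (x :: l)]. Qed.

Lemma free_language_no_attack a b : ~ attacks free_language a b.
Proof. now intros [[s [_ []]] | []]. Qed.

Lemma free_language_no_undercut E a : ~ undercut_info free_language E a.
Proof. now intros [x [[] _]]. Qed.

Lemma free_language_strongly_coherentE (A E : Arg S -> Prop) :
  strongly_coherent free_language A E <->
  subset E A /\ (forall a, A a -> supports E a -> E a).
Proof.
  split.
  - intros [HEA [_ Hclosed]]; split; [exact HEA|].
    intros a Aa Ea; apply Hclosed; [exact Aa | exact Ea | apply free_language_no_undercut].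
  - intros [HEA Hclosed]; repeat split; [exact HEA | | | ].
    + intros a b _ _; apply free_language_no_attack.
    + intros a _ b _ Hab; now apply free_language_no_attack in Hab.
    + intros a Aa Ea _; now apply Hclosed.
Qed.

End FreeLanguage.

Definition arg_0_1 : Arg nat := arg_of (0 :: nil) 1.
Definition arg_1_2 : Arg nat := arg_of (1 :: nil) 2.
Definition arg_02_3 : Arg nat := arg_of (0 :: 2 :: nil) 3.

Definition A_all (a : Arg nat) : Prop := a = arg_0_1 \/ a = arg_1_2 \/ a = arg_02_3.
Definition U_part (a : Arg nat) : Prop := a = arg_0_1 \/ a = arg_02_3.
Definition E_part (a : Arg nat) : Prop := a = arg_0_1.

Lemma A_all_is_SBAF : is_SBAF free_language A_all.
Proof.
  split; [exact (free_language_wf 0) | split].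
  - exists (arg_0_1 :: arg_1_2 :: arg_02_3 :: nil); intro a; cbn; unfold A_all.
    split; [intros [-> | [-> | ->]] | intros [<- | [<- | [<- | []]]]]; tauto.
  - intros a [-> | [-> | ->]]; apply arg_of_is_argument.
Qed.

Lemma U_part_not_supported_from_outside b :
  U_part b -> ~ supports (fun a => A_all a /\ ~ U_part a) b.
Proof.
  assert (H0 : ~ SentE (fun a => A_all a /\ ~ U_part a) 0).
  { intros [a [[[-> | [-> | ->]] HnU] Ha]]; try (apply HnU; unfold U_part; tauto).
    destruct Ha as [[H | []] | H]; discriminate H. }
  intros [-> | ->] Hsupp; apply H0, Hsupp; now left.
Qed.

Lemma E_part_strongly_coherent_in_U : strongly_coherent free_language U_part E_part.
Proof.
  apply free_language_strongly_coherentE; split.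
  - intros a ->; now left.
  - intros a [-> | ->] Hsupp; [reflexivity|].
    destruct (Hsupp 2) as [c [-> [[H | []] | H]]]; [right; now left | discriminate H ..].
Qed.

Lemma E_part_no_coherent_extension :
  ~ exists E', strongly_coherent free_language A_all E' /\
               (forall a, E_part a <-> (E' a /\ U_part a)).
Proof.
  intros [E' [HE' Hrestrict]].
  apply free_language_strongly_coherentE in HE' as [_ Hclosed].
  assert (H01 : E' arg_0_1) by (apply Hrestrict; reflexivity).
  assert (H12 : E' arg_1_2).
  { apply Hclosed; [unfold A_all; tauto|].
    intros x [<- | []]; exists arg_0_1; split; [exact H01 | now right]. }
  assert (H023 : E' arg_02_3).
  { apply Hclosed; [unfold A_all; tauto|].
    intros x [<- | [<- | []]].
    - exists arg_0_1; split; [exact H01 | now left; left].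
    - exists arg_1_2; split; [exact H12 | now right]. }
  assert (Heq : E_part arg_02_3) by (apply Hrestrict; split; [exact H023 | now right]).
  discriminate Heq.
Qed.

Theorem mainTheorem1 :
  exists (S : Type) (Lg : Language S) (A U E : Arg S -> Prop),
    is_SBAF Lg A /\ subset U A /\ subset E U /\
    (* (i) *)
    (forall a b, A a -> ~ U a -> U b -> ~ attacks Lg a b) /\
    (forall b, U b -> ~ supports (fun a => A a /\ ~ U a) b) /\
    (* (ii) *)
    strongly_coherent Lg U E /\
    (* (iii) *)
    ~ (exists E' : Arg S -> Prop,
         strongly_coherent Lg A E' /\ (forall a, E a <-> (E' a /\ U a))).
Proof.
  exists nat, free_language, A_all, U_part, E_part.
  split; [exact A_all_is_SBAF|].
  split; [intros a; unfold U_part, A_all; tauto|].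
  split; [intros a ->; now left|].
  split; [intros a b _ _ _; apply free_language_no_attack|].
  split; [exact U_part_not_supported_from_outside|].
  split; [exact E_part_strongly_coherent_in_U|].
  exact E_part_no_coherent_extension.
Qed.
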